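(* For every integer $n\ge 2$, $$\sum_{\substack{b\ge 1,\ k\ge 0\\ 2b+k=n}} \#\mathrm{SYT}^{+k}\big((b,b)\big) = \mathrm{Cat}(n-1),$$ where $\mathrm{Cat}(m)=\frac{1}{m+1}\binom{2m}{m}$ is the $m$-th Catalan number.
   Context: For a partition $\lambda$ of $N$ (identified with its Ferrers diagram, cells in matrix coordinates $(\text{row},\text{column})$) and an integer $k\ge 0$, $\mathrm{SYT}^{+k}(\lambda)$ denotes the set of set-valued standard Young tableaux of shape $\lambda$ with entries in $[N+k]$: fillings $S$ of the cells of $\lambda$ by nonempty sets of positive integers such that (1) the sets $S(u)$ form a set partition of $[N+k]$, and (2) whenever $u\neq v$ and $u$ is weakly north and weakly west of $v$, $\max S(u)<\min S(v)$. The shape $(b,b)$ is the $2\times b$ rectangle. *)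

From mathcomp Require Import all_boot.
Set Implicit Arguments. Unset Strict Implicit. Unset Printing Implicit Defensive.

(* A partition lambda is a weakly decreasing seq nat of positive parts,
   lambda = [:: lambda_1; lambda_2; ...].  Its Ferrers diagram lives inside the
   bounding box 'I_(size lambda) * 'I_(lambda_1); cell (i,j) (0-based row i,
   column j) belongs to the diagram iff j < lambda_i. *)
Definition cellT (la : seq nat) : finType := ('I_(size la) * 'I_(head 0 la))%type.

Definition in_diagram (la : seq nat) (u : cellT la) : bool :=
  (u.2 : nat) < nth 0 la u.1.

(* Entries: the integer x+1 of [N+k] is encoded by x : 'I_(N+k)
   (order preserving, so comparisons are unaffected). *)
Definition entryT (la : seq nat) (k : nat) : finType := 'I_(sumn la + k).

(* Set-valued standard Young tableau of shape la with entries in [N+k]: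
   a filling S of the cells by sets (S u = set0 off the diagram, so fillings
   are identified with functions on the diagram). *)
Definition is_svSYT (la : seq nat) (k : nat)
    (S : {ffun cellT la -> {set entryT la k}}) : bool :=
  [forall u, ~~ in_diagram u ==> (S u == set0)] &&
  [forall u, in_diagram u ==> (S u != set0)] &&
  [forall x, #|[set u | in_diagram u & x \in S u]| == 1] &&
  [forall u, forall v,
     [&& in_diagram u, in_diagram v, u != v,
         (u.1 <= v.1)%N & (u.2 <= v.2)%N] ==>
     [forall a, forall b, (a \in S u) && (b \in S v) ==> (a < b)%N]].

Definition nSVSYT (la : seq nat) (k : nat) : nat :=
  #|[set S : {ffun cellT la -> {set entryT la k}} | is_svSYT S]|.

(* Catalan numbers: Cat m = binom(2m, m) / (m+1) (exact division). *)
Definition Catalan (m : nat) : nat := 'C(m.*2, m) %/ m.+1.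

(* Record a set-valued tableau of shape (b, b) by the word listing, for each
   entry in increasing order, the cell that contains it.  The tableau condition
   says that every letter is a cell that is not weakly north-west of a cell used
   before, and that all cells are used; only the row lengths (i, j) reached so
   far matter.  Summing over b removes the bound on the row lengths, leaving
   walks from (0, 0) back to the diagonal i = j.  In terms of the gap i - j these
   are Motzkin paths with two kinds of level steps, which become Dyck paths of
   twice the length, counted by the Catalan numbers. *)

From mathcomp Require Import all_boot.
From mathcomp Require Import zify.
Set Implicit Arguments. Unset Strict Implicit. Unset Printing Implicit Defensive.

Fixpoint dyck_paths (len h : nat) : nat :=
  if len is l.+1 then dyck_paths l h.+1 + (if h is h'.+1 then dyck_paths l h' else 0)
  else h == 0.

Lemma dyck_paths_eq0 len h : len < h -> dyck_paths len h = 0.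
Proof. by elim: len h => [|l IH] [|h] //= lt_lh; rewrite !IH //; lia. Qed.

(* The reflection principle, in subtraction-free form. *)
Lemma dyck_paths_bin len u : u.*2 <= len ->
  dyck_paths len (len - u.*2) + (if u is u'.+1 then 'C(len, u') else 0) = 'C(len, u).
Proof.
elim: len u => [|len IH] [|u] //= le_u_len.
  by rewrite subn0 dyck_paths_eq0 // bin0; have := IH 0 isT; rewrite subn0 bin0.
have IHu := IH u (ltnW le_u_len).
have binSu : 'C(len.+1, u) = 'C(len, u) + 'C(len, u.-1) * (0 < u).
  by case: u {IHu le_u_len} => [|u]; rewrite ?bin0 ?binS //= muln1.
have {}IHu : dyck_paths len (len - u.*2) + 'C(len, u.-1) * (0 < u) = 'C(len, u).
  by case: u IHu {binSu le_u_len} => [|u]; rewrite ?muln0 ?muln1.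
rewrite binSu binS; case: (ltnP u.+1.*2 len.+1) => [lt_u_len | ge_u_len].
- have := IH u.+1 (ltnSE lt_u_len).
  have -> : len.+1 - u.+1.*2 = (len - u.+1.*2).+1 by lia.
  rewrite /= (_ : (len - u.+1.*2).+2 = len - u.*2); lia.
- have len_odd : len = u.*2.+1 by lia.
  have bin_mid : 'C(len, u.+1) = 'C(len, u).
    by rewrite -(bin_sub (n := len) (m := u)); [congr 'C(_, _) | ]; lia.
  rewrite (_ : len.+1 - u.+1.*2 = 0) /= ?addn0; last by lia.
  rewrite (_ : 1 = len - u.*2) in IHu *; lia.
Qed.

Lemma dyck_paths_catalan m : dyck_paths m.*2.+2 0 = Catalan m.+1.
Proof.
have := dyck_paths_bin (leqnn m.+1.*2); rewrite subnn.
have := mul_bin_left m.*2.+2 m; rewrite (_ : m.*2.+2 - m = m.+2); last by lia.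
rewrite /Catalan doubleS; set D := dyck_paths _ 0 => bin_left bin_D.
by rewrite (_ : 'C(_, m.+1) = m.+2 * D) ?mulKn //; nia.
Qed.

(* States [(i, j)] are the numbers of occupied cells in the two rows.  The
   moves are: open a cell in row 1 ([i < b]); open a cell in row 2 or add an
   entry to the last cell of row 1 (both need [j < i]); add an entry to the
   last cell of row 2 ([0 < j]). *)
Fixpoint walks_to (b R i j : nat) : nat :=
  if R is R'.+1 then
    (i < b) * walks_to b R' i.+1 j + (j < i) * (walks_to b R' i j.+1 + walks_to b R' i j)
    + (0 < j) * walks_to b R' i j
  else (i == b) && (j == b).

Fixpoint walks_to_diag (R i j : nat) : nat :=
  if R is R'.+1 then
    walks_to_diag R' i.+1 j + (j < i) * (walks_to_diag R' i j.+1 + walks_to_diag R' i j)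
    + (0 < j) * walks_to_diag R' i j
  else i == j.

Lemma walks_to_diagS R i j : walks_to_diag R.+1 i j =
  walks_to_diag R i.+1 j + (j < i) * (walks_to_diag R i j.+1 + walks_to_diag R i j)
  + (0 < j) * walks_to_diag R i j.
Proof. by []. Qed.

(* With [0 < j] the gap [i - j] performs a Motzkin path with two kinds of
   level steps; splitting each step in two gives a Dyck path at height twice the gap. *)
Lemma walks_to_diag_gap R i j : j < i ->
  walks_to_diag R i j.+1 = dyck_paths R.*2 (i - j.+1).*2.
Proof.
elim: R i j => [|R IH] i j lt_ji; first by congr nat_of_bool; apply/eqP/eqP; lia.
rewrite walks_to_diagS (IH i.+1 j (leqW lt_ji)) (IH i j) //.
rewrite (_ : i.+1 - j.+1 = (i - j.+1).+1); last by lia.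
case: (ltnP j.+1 i) => [lt_j1i | ge_j1i].
- rewrite IH // (_ : i - j.+2 = (i - j.+1).-1); last by lia.
  have : 0 < i - j.+1 by lia.
  by case: (i - j.+1) => [|h] //= _; rewrite !doubleS /=; lia.
- by rewrite (_ : i - j.+1 = 0) ?doubleS ?double0 /=; lia.
Qed.

Lemma walks_to_diag_row2_empty R i :
  walks_to_diag R.+1 i.+1 0 = dyck_paths R.*2.+1 i.*2.+1.
Proof.
elim: R i => [|R IH] i; first by rewrite /= !mul1n !mul0n; case: i.
rewrite walks_to_diagS !IH walks_to_diag_gap // subSS subn0 !doubleS /=; lia.
Qed.

Lemma walks_to_diag00 m : walks_to_diag m.+2 0 0 = dyck_paths m.*2.+2 0.
Proof. by rewrite walks_to_diagS walks_to_diag_row2_empty /= !addn0. Qed.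

Lemma walks_to_eq0_row1 b R i j : i + R < b -> walks_to b R i j = 0.
Proof.
elim: R i j => [|R IH] i j /= lt_b; last by rewrite !IH //; lia.
by case: eqP => // ib; lia.
Qed.

Lemma walks_to_eq0 b R i j : i + j + R < b.*2 -> walks_to b R i j = 0.
Proof.
elim: R i j => [|R IH] i j /= lt_b; last by rewrite !IH //; lia.
by case: eqP => // ib; case: eqP => // jb; lia.
Qed.

Lemma walks_to_diag_sum R i j : j <= i ->
  walks_to_diag R i j = \sum_(i <= b < i + R.+1) walks_to b R i j.
Proof.
elim: R i j => [|R IH] i j le_ji.
  by rewrite addn1 big_nat1 /= eqxx eq_sym.
rewrite /= !big_split /= -!big_distrr /=.
have sum_open1 : \sum_(i <= b < i + R.+2) (i < b) * walks_to b R i.+1 j = walks_to_diag R i.+1 j.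
  rewrite big_ltn ?ltnn ?mul0n ?add0n ?IH -?addSnnS; try lia.
  by apply: eq_big_nat => b /andP [lt_ib _]; rewrite lt_ib mul1n.
have sum_stay jj : jj <= i -> \sum_(i <= b < i + R.+2) walks_to b R i jj = walks_to_diag R i jj.
  move=> le_jj; rewrite addnS big_nat_recr /=; last by lia.
  by rewrite walks_to_eq0_row1 ?addn0 -?IH //; lia.
rewrite sum_open1 sum_stay //.
by case: (ltnP j i) => lt_ji; rewrite ?mul0n // big_split /= !sum_stay.
Qed.

Section FfunCons.
Variables (T : finType) (M : nat).

Definition ffun_cons (x : T) (f : {ffun 'I_M -> T}) : {ffun 'I_M.+1 -> T} :=
  [ffun i => if unlift ord0 i is Some j then f j else x].

Lemma codom_ffun_cons x f : codom (ffun_cons x f) = x :: codom f.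
Proof.
rewrite !codomE enum_ordSl /= ffunE unlift_none -map_comp.
by congr (_ :: _); apply: eq_map => j /=; rewrite ffunE liftK.
Qed.

Lemma card_ffunS_codom (Q : pred (seq T)) :
  #|[set f : {ffun 'I_M.+1 -> T} | Q (codom f)]| =
  \sum_(x : T) #|[set f : {ffun 'I_M -> T} | Q (x :: codom f)]|.
Proof.
rewrite -sum1_card (reindex (fun p => ffun_cons p.1 p.2)) /=; last first.
  exists (fun f : {ffun 'I_M.+1 -> T} => (f ord0, [ffun j => f (lift ord0 j)])).
    move=> [x f] _ /=; rewrite ffunE unlift_none.
    by congr (_, _); apply/ffunP => j; rewrite !ffunE liftK.
  move=> f _; apply/ffunP => i; rewrite !ffunE /=.
  by case: (unliftP ord0 i) => [j ->|->]; rewrite ?ffunE.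
under eq_bigl => p do rewrite inE codom_ffun_cons.
rewrite big_mkcond /=.
rewrite -(pair_bigA _ (fun x (f : {ffun 'I_M -> T}) => if Q (x :: codom f) then 1 else 0)) /=.
apply: eq_bigr => x _.
by rewrite -sum1_card [RHS]big_mkcond; apply: eq_bigr => f _; rewrite inE.
Qed.

End FfunCons.

Section Fillings.
Variable b : nat.

Definition cell : finType := ('I_2 * 'I_b)%type.

Definition cell_lt (u v : cell) : bool := [&& u.1 <= v.1, u.2 <= v.2 & u != v].

Definition admissible (D : {set cell}) (v : cell) : bool := [forall u in D, ~~ cell_lt v u].

Fixpoint fill_ok (D : {set cell}) (t : seq cell) : bool :=
  if t is v :: t' then admissible D v && fill_ok (v |: D) t' else D == setT.

Definition nfill (M : nat) (D : {set cell}) : nat :=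
  #|[set c : {ffun 'I_M -> cell} | fill_ok D (codom c)]|.

Lemma nfillS M D : nfill M.+1 D = \sum_(v : cell) admissible D v * nfill M (v |: D).
Proof.
rewrite /nfill card_ffunS_codom; apply: eq_bigr => v _ /=.
case: (admissible D v); rewrite ?mul1n ?mul0n //.
by apply/eqP; rewrite cards_eq0; apply/eqP/setP => c; rewrite !inE.
Qed.

Lemma nfill0 D : nfill 0 D = (D == setT).
Proof.
rewrite /nfill.
have -> : [set c : {ffun 'I_0 -> cell} | fill_ok D (codom c)] = if D == setT then setT else set0.
  by apply/setP => c; rewrite inE codomE enum_ord0 /=; case: (D == setT); rewrite !inE.
by case: (D == setT); rewrite ?cardsT ?card_ffun ?card_ord ?cards0.
Qed.

Lemma admissibleU1 v w D : admissible (w |: D) v = ~~ cell_lt v w && admissible D v.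
Proof.
apply/forall_inP/andP => [adm | [ltvw /forall_inP adm] u].
  split; first by apply: adm; rewrite setU11.
  by apply/forall_inP => u Du; apply: adm; rewrite inE Du orbT.
by rewrite in_setU1 => /orP [/eqP -> | /adm].
Qed.

Lemma fill_okE D t : fill_ok D t =
  [&& pairwise (fun v w => ~~ cell_lt w v) t, all (admissible D) t &
      [forall u, (u \in D) || (u \in t)]].
Proof.
elim: t D => [|v t IH] D /=.
  apply/eqP/forallP => [-> u | cover]; first by rewrite in_setT.
  by apply/setP => u; rewrite in_setT; have := cover u; rewrite orbF.
rewrite IH.
have -> : all (admissible (v |: D)) t = all (fun w => ~~ cell_lt w v) t && all (admissible D) t.
  by rewrite -all_predI; apply: eq_all => w /=; rewrite admissibleU1.
have -> : [forall u, (u \in v |: D) || (u \in t)] = [forall u, (u \in D) || (u \in v :: t)].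
  by apply: eq_forallb => u; rewrite in_setU1 in_cons orbCA orbA.
by case: (admissible D v); case: (all _ t); case: (pairwise _ t); rewrite ?andbF.
Qed.

Lemma nfill_hole M (D : {set cell}) u w : u \in D -> w \notin D -> cell_lt w u -> nfill M D = 0.
Proof.
move=> Du Dw ltwu; apply/eqP; rewrite cards_eq0; apply/eqP/setP => c; rewrite !inE fill_okE.
apply/negP => /and3P [_ /allP adm /forallP /(_ w)]; rewrite (negbTE Dw) /= => /adm.
by move/forall_inP/(_ u Du); rewrite ltwu.
Qed.

End Fillings.

Lemma cell_eqE b (u v : cell b) : (u == v) = (u.1 == v.1 :> nat) && (u.2 == v.2 :> nat).
Proof. by case: u v => [? ?] [? ?]. Qed.

Lemma cell_ltE b (u v : cell b) : cell_lt u v =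
  [&& u.1 <= v.1, u.2 <= v.2 & (u.1 != v.1 :> nat) || (u.2 != v.2 :> nat)].
Proof. by rewrite /cell_lt cell_eqE negb_and. Qed.

Definition diagram2 b i j : {set cell b} :=
  [set u : cell b | (u.1 == 0 :> nat) && (u.2 < i) || (u.1 != 0 :> nat) && (u.2 < j)].

Ltac cell_lia :=
  let x := fresh "x" in let y := fresh "y" in
  move=> [[x ?] [y ?]]; rewrite ?in_setU1 ?cell_eqE ?cell_ltE ?inE /=; lia.

Lemma not_admissible b (D : {set cell b}) u v : u \in D -> cell_lt v u -> admissible D v = false.
Proof. by move=> Du ltvu; apply/negbTE/forall_inPn; exists u; rewrite ?ltvu. Qed.

Definition step_walks b M i j (r c : nat) : nat :=
  if r == 0 then (c == i) * walks_to b M i.+1 j + (c.+1 == i) * ((j < i) * walks_to b M i j)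
  else (c == j) * ((j < i) * walks_to b M i j.+1) + (c.+1 == j) * walks_to b M i j.

Section Step.
Variables (b M i j : nat).
Hypothesis nfill_diagram2 :
  forall i' j', j' <= i' <= b -> nfill M (diagram2 b i' j') = walks_to b M i' j'.
Hypothesis le_j_i_b : j <= i <= b.

Lemma nfill_step_row1 (c : 'I_b) :
  admissible (diagram2 b i j) (ord0, c) * nfill M ((ord0, c) |: diagram2 b i j) =
  (c == i :> nat) * walks_to b M i.+1 j + (c.+1 == i) * ((j < i) * walks_to b M i j).
Proof.
case: (ltngtP c i) => [lt_ci | lt_ic | eq_ci].
- case: (eqVneq c.+1 i) => [ci1 | ci1]; last first.
    have lt_c1b : c.+1 < b by lia.
    by rewrite (@not_admissible _ _ (ord0, Ordinal lt_c1b)) ?inE ?cell_ltE /= ?mul0n; lia.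
  case: (ltnP j i) => lt_ji; last first.
    by rewrite (@not_admissible _ _ (ord_max, c)) ?inE ?cell_ltE /= ?mul0n ?muln0; lia.
  rewrite (_ : admissible _ _); last by apply/forall_inP; cell_lia.
  rewrite (_ : _ |: _ = diagram2 b i j); last by apply/setP; cell_lia.
  by rewrite nfill_diagram2 /= ?mul1n.
- have lt_ib : i < b by have := ltn_ord c; lia.
  by rewrite (@nfill_hole _ _ _ (ord0, c) (ord0, Ordinal lt_ib))
    ?muln0 ?in_setU1 ?eqxx ?cell_eqE ?inE ?cell_ltE /=; lia.
- rewrite -eq_ci (_ : admissible _ _); last by apply/forall_inP; cell_lia.
  rewrite (_ : _ |: _ = diagram2 b c.+1 j); last by apply/setP; cell_lia.
  by rewrite nfill_diagram2 /=; have := ltn_ord c; lia.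
Qed.

Lemma nfill_step_row2 (c : 'I_b) :
  admissible (diagram2 b i j) (ord_max, c) * nfill M ((ord_max, c) |: diagram2 b i j) =
  (c == j :> nat) * ((j < i) * walks_to b M i j.+1) + (c.+1 == j) * walks_to b M i j.
Proof.
case: (ltngtP c j) => [lt_cj | lt_jc | eq_cj].
- case: (eqVneq c.+1 j) => [cj1 | cj1]; last first.
    have lt_c1b : c.+1 < b by lia.
    by rewrite (@not_admissible _ _ (ord_max, Ordinal lt_c1b)) ?inE ?cell_ltE /= ?mul0n; lia.
  rewrite (_ : admissible _ _); last by apply/forall_inP; cell_lia.
  rewrite (_ : _ |: _ = diagram2 b i j); last by apply/setP; cell_lia.
  by rewrite nfill_diagram2 /=; lia.
- have lt_jb : j < b by have := ltn_ord c; lia.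
  by rewrite (@nfill_hole _ _ _ (ord_max, c) (ord_max, Ordinal lt_jb))
    ?muln0 ?in_setU1 ?eqxx ?cell_eqE ?inE ?cell_ltE /=; lia.
- case: (ltnP j i) => lt_ji; last first.
    by rewrite (@nfill_hole _ _ _ (ord_max, c) (ord0, c))
      ?muln0 ?in_setU1 ?eqxx ?cell_eqE ?inE ?cell_ltE /=; lia.
  rewrite (_ : admissible _ _); last by apply/forall_inP; cell_lia.
  rewrite (_ : _ |: _ = diagram2 b i j.+1); last by apply/setP; cell_lia.
  by rewrite nfill_diagram2 /=; lia.
Qed.

Lemma nfill_step (v : cell b) :
  admissible (diagram2 b i j) v * nfill M (v |: diagram2 b i j) = step_walks b M i j v.1 v.2.
Proof.
case: v => [[[|[|r]] lt_r2] c] //.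
  by rewrite (_ : Ordinal lt_r2 = ord0) ?nfill_step_row1 //; apply: val_inj.
by rewrite (_ : Ordinal lt_r2 = ord_max) ?nfill_step_row2 //; apply: val_inj.
Qed.

End Step.

Lemma diagram2_eqT b i j : j <= i <= b -> (diagram2 b i j == setT) = (i == b) && (j == b).
Proof.
move=> le_jib; apply/eqP/andP => [full | [/eqP -> /eqP ->]]; last by apply/setP; cell_lia.
have in_full u : u \in diagram2 b i j by rewrite full inE.
case: (ltnP i b) => [lt_ib | ?].
  by have := in_full (ord0, Ordinal lt_ib); rewrite inE /=; lia.
case: (ltnP j b) => [lt_jb | ?].
  by have := in_full (ord_max, Ordinal lt_jb); rewrite inE /=; lia.
by split; apply/eqP; lia.
Qed.

Lemma sum_ord_eq_mul n t X : \sum_(c < n) (c == t :> nat) * X = (t < n) * X.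
Proof. by elim: n => [|n IH]; rewrite ?big_ord0 // big_ord_recr /= IH; lia. Qed.

Lemma sum_ord_eqS_mul n t X : \sum_(c < n) (c.+1 == t) * X = ((0 < t) && (t <= n)) * X.
Proof. by elim: n => [|n IH]; rewrite ?big_ord0 ?big_ord_recr /= ?IH; lia. Qed.

Lemma nfill_diagram2 b M i j : j <= i <= b -> nfill M (diagram2 b i j) = walks_to b M i j.
Proof.
elim: M i j => [|M IH] i j le_jib; first by rewrite nfill0 diagram2_eqT.
rewrite nfillS (eq_bigr _ (fun v _ => nfill_step IH le_jib v)).
rewrite -(pair_bigA _ (fun (r : 'I_2) (c : 'I_b) => step_walks b M i j r c)) /step_walks /=.
rewrite !big_ord_recr big_ord0 /= !big_split /= !sum_ord_eq_mul !sum_ord_eqS_mul; lia.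
Qed.

Lemma pairwise_codom_ord (T : Type) M (r : rel T) (f : 'I_M -> T) :
  pairwise r (codom f) = [forall x : 'I_M, forall y : 'I_M, (x < y) ==> r (f x) (f y)].
Proof.
rewrite codomE pairwise_map; case: M f => [|M] f.
  by rewrite enum_ord0; apply/esym/forallP => [[]].
have nth_enum (x : nat) (lt_xM : x < M.+1) : nth ord0 (enum 'I_M.+1) x = Ordinal lt_xM.
  by apply/val_inj; rewrite /= nth_enum_ord.
apply/(pairwiseP ord0)/forallP => [rf x | rf x y].
  apply/forallP => y; apply/implyP => lt_xy.
  by have := rf x y; rewrite !inE size_enum_ord !ltn_ord !nth_ord_enum; apply.
rewrite !inE size_enum_ord => lt_xM lt_yM lt_xy.
by rewrite !nth_enum; move/forallP: (rf (Ordinal lt_xM)) => /(_ (Ordinal lt_yM)) /implyP; apply.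
Qed.

Lemma fill_ok_set0 b M (c : {ffun 'I_M -> cell b}) : fill_ok set0 (codom c) =
  [forall x : 'I_M, forall y : 'I_M, (x < y) ==> ~~ cell_lt (c y) (c x)] &&
  [forall u, exists x, c x == u].
Proof.
rewrite fill_okE pairwise_codom_ord.
have -> : all (admissible set0) (codom c) by apply/allP => v _; apply/forall_inP => u; rewrite inE.
congr andb; apply: eq_forallb => u; rewrite inE /=.
by apply/codomP/existsP => [[x ->] | [x /eqP <-]]; exists x.
Qed.

Lemma in_diagram_rect b (u : cellT [:: b; b]) : in_diagram u.
Proof. by case: u => [[[|[|r]] lt_r2] c] //=; rewrite /in_diagram /= ltn_ord. Qed.

Definition tableau_of b k (c : {ffun entryT [:: b; b] k -> cell b}) :
  {ffun cellT [:: b; b] -> {set entryT [:: b; b] k}} := [ffun u => [set x | c x == u]].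

Lemma is_svSYT_tableau_of b k (c : {ffun entryT [:: b; b] k -> cell b}) :
  is_svSYT (tableau_of c) = fill_ok set0 (codom c).
Proof.
rewrite fill_ok_set0 /is_svSYT.
have -> : [forall u, ~~ in_diagram u ==> (tableau_of c u == set0)].
  by apply/forallP => u; rewrite in_diagram_rect.
have -> : [forall x, #|[set u | in_diagram u & x \in tableau_of c u]| == 1].
  apply/forallP => x; apply/cards1P; exists (c x); apply/setP => u.
  by rewrite !inE in_diagram_rect ffunE inE eq_sym.
have -> : [forall u, in_diagram u ==> (tableau_of c u != set0)] = [forall u, exists x, c x == u].
  apply: eq_forallb => u; rewrite in_diagram_rect ffunE /=.
  by apply/set0Pn/existsP => [[x p] | [x p]]; exists x; rewrite inE in p *.
rewrite andbT andbC; congr andb; apply/forallP/forallP => [nw x | ordered u].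
  apply/forallP => y; apply/implyP => lt_xy; apply/negP => ltc_yx.
  move/forallP: (nw (c y)) => /(_ (c x)); rewrite !in_diagram_rect /=.
  move: ltc_yx; rewrite /cell_lt => /and3P [-> -> ->] /= /forallP /(_ y) /forallP /(_ x).
  by rewrite !ffunE !inE !eqxx /= ltnNge ltnW.
apply/forallP => v; rewrite !in_diagram_rect /=; apply/implyP => /and3P [neq_uv le1 le2].
apply/forallP => x; apply/forallP => y; rewrite !ffunE !inE.
apply/implyP => /andP [/eqP cxu /eqP cyv].
case: (ltngtP x y) => // [lt_yx | /val_inj eq_xy].
  by move/forallP: (ordered y) => /(_ x) /implyP /(_ lt_yx); rewrite cxu cyv /cell_lt neq_uv le1 le2.
by move: neq_uv; rewrite -cxu -cyv eq_xy eqxx.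
Qed.

Lemma tableau_of_inj b k : injective (@tableau_of b k).
Proof.
move=> c1 c2 eq_c; apply/ffunP => x.
have := congr1 (fun S : {ffun cellT [:: b; b] -> {set entryT [:: b; b] k}} => x \in S (c1 x)) eq_c.
by rewrite /= !ffunE !inE eqxx => /esym/eqP.
Qed.

Lemma svSYT_tableau_of b k S : is_svSYT S -> exists c, S = @tableau_of b.+1 k c.
Proof.
case/andP => /andP [_ /forallP partition] _.
exists [ffun x => odflt (ord0, ord0) [pick u | x \in S u]].
apply/ffunP => u; apply/setP => x; rewrite !ffunE inE ffunE.
have /cards1P [u0 cell_x] := partition x.
have in_Su w : (x \in S w) = (w == u0).
  have := congr1 (fun A : {set cellT [:: b.+1; b.+1]} => w \in A) cell_x.
  by rewrite /= !inE in_diagram_rect.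
case: (pickP (fun w => x \in S w)) => [w | /(_ u0)]; rewrite /= !in_Su ?eqxx //.
by move=> /eqP ->; rewrite eq_sym.
Qed.

Lemma nSVSYT_nfill b k :
  nSVSYT [:: b.+1; b.+1] k = nfill (sumn [:: b.+1; b.+1] + k) (set0 : {set cell b.+1}).
Proof.
rewrite /nSVSYT /nfill -(card_imset _ (@tableau_of_inj b.+1 k)).
apply: eq_card => S; rewrite inE; apply/idP/imsetP => [svS | [c]].
  by have [c eq_S] := svSYT_tableau_of svS; exists c; rewrite // inE -is_svSYT_tableau_of -eq_S.
by rewrite inE -is_svSYT_tableau_of => ok_c ->.
Qed.

Lemma sum_nat_addn_eq (F : nat -> nat) n t :
  \sum_(0 <= k < n.+1 | t + k == n) F k = (t <= n) * F (n - t).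
Proof.
rewrite big_mkcond big_mkord.
rewrite (eq_bigr (fun k : 'I_n.+1 => (k == n - t :> nat) * ((t <= n) * F (n - t)))).
  by rewrite sum_ord_eq_mul; case: (leqP t n) => ?; rewrite ?mul0n ?muln0 ?mul1n //; lia.
move=> k _; case: eqP => [eq_n | ne]; last by case: eqP => // ?; lia.
have le_tn : t <= n by lia.
by rewrite (_ : n - t = k) ?le_tn ?eqxx ?mul1n //; lia.
Qed.

Lemma nSVSYT_walks b k : nSVSYT [:: b.+1; b.+1] k = walks_to b.+1 (b.+1 + b.+1 + k) 0 0.
Proof.
rewrite nSVSYT_nfill -nfill_diagram2 //.
by congr nfill; [rewrite /= addn0 | apply/setP; cell_lia].
Qed.

Theorem mainTheorem1 (n : nat) (hn : 2 <= n) :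
  \sum_(1 <= b < n.+1) \sum_(0 <= k < n.+1 | 2 * b + k == n) nSVSYT [:: b; b] k
  = Catalan n.-1.
Proof.
case: n hn => [|[|m]] // _.
have inner_sum b : \sum_(0 <= k < m.+3 | 2 * b.+1 + k == m.+2) nSVSYT [:: b.+1; b.+1] k =
              walks_to b.+1 m.+2 0 0.
  rewrite sum_nat_addn_eq nSVSYT_walks; case: (leqP (2 * b.+1) m.+2) => le_n.
    by rewrite mul1n; congr walks_to; lia.
  by rewrite mul0n walks_to_eq0 //; lia.
rewrite big_add1 /= (eq_bigr _ (fun b _ => inner_sum b)) -(dyck_paths_catalan m) -walks_to_diag00.
by rewrite (walks_to_diag_sum _ (leqnn 0)) add0n [RHS]big_nat_recl.
Qed.
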